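(* Let $G=(Q,\Sigma,\delta_G,q_0,Q_m)$ be a DFA, $\Sigma_o$ a subset of $\Sigma$, and $H:=T_{\Sigma_o}(G)$. Then $match_{\Sigma_o}=eq(G\,\|\,H)$ as binary relations on $\Sigma^*$.
   Context: For a DFA $K$ with initial state $k_0$ and alphabet $\Sigma$, the equiresponse relation $eq(K)$ on $\Sigma^*$ is: $s\equiv s'\bmod eq(K)$ iff $\delta_K(k_0,s)=\delta_K(k_0,s')$, where if $\delta_K(k_0,s)$ is undefined the equality holds iff $\delta_K(k_0,s')$ is also undefined. $P_{\Sigma_o}$ is the natural projection onto $\Sigma_o^*$. The observer $H=T_{\Sigma_o}(G)$ is the DFA over $\Sigma_o$ with subset states, initial state $A_0=\epsilon R_G(q_0)$ (where $\epsilon R_G(q)=\{\delta_G(q,s):P_{\Sigma_o}(s)=\epsilon\}$), transitions $\delta_H(B,\sigma)=\bigcup_{q\in B,\ \delta_G(q,\sigma)\text{ defined}}\epsilon R_G(\delta_G(q,\sigma))$ (defined iff nonempty). $G\,\|\,H$ is the accessible part of the automaton over $\Sigma$ with states $(q,A)$, initial state $(q_0,A_0)$, transitions $((q,A),\sigma)\mapsto(\delta_G(q,\sigma),\delta_H(A,\sigma))$ for $\sigma\in\Sigma_o$ and $((q,A),\sigma)\mapsto(\delta_G(q,\sigma),A)$ for $\sigma\in\Sigma\setminus\Sigma_o$. The relation $match_{\Sigma_o}$ on $\Sigma^*$: $(s,s')\in match_{\Sigma_o}$ iff $s\equiv s'\bmod eq(G)$ and $P_{\Sigma_o}(s)\equiv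 P_{\Sigma_o}(s')\bmod eq(H)$; moreover, if $s\notin L(G)$ then $(s,s')\in match_{\Sigma_o}$ iff $s'\notin L(G)$. *)

From mathcomp Require Import all_boot.
From Stdlib Require Import ClassicalDescription.
Set Implicit Arguments. Unset Strict Implicit. Unset Printing Implicit Defensive.

Fixpoint ext (S T : Type) (d : S -> T -> option S) (x : S) (s : seq T)
  : option S :=
  match s with
  | [::] => Some x
  | a :: s' => match d x a with Some y => ext d y s' | None => None end
  end.

(* Equiresponse relation eq(K) of an automaton with transition d and initial
   state x0: s == s' mod eq(K) iff delta(x0,s) = delta(x0,s') (as options,
   so "both undefined" counts as equal). *)
Definition eqresp (S T : Type) (d : S -> T -> option S) (x0 : S)
  (s s' : seq T) : Prop := ext d x0 s = ext d x0 s'.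

Definition natproj (Sigma : finType) (So : {set Sigma}) (s : seq Sigma)
  : seq Sigma := [seq a <- s | a \in So].

Definition epsR (Q Sigma : finType) (So : {set Sigma})
  (d : Q -> Sigma -> option Q) (q : Q) : Q -> Prop :=
  fun q' => exists s, natproj So s = [::] /\ ext d q s = Some q'.

(* Observer T_{Sigma_o}(G): states are subsets of Q (as predicates). *)
Definition obs_init (Q Sigma : finType) (So : {set Sigma})
  (d : Q -> Sigma -> option Q) (q0 : Q) : Q -> Prop := epsR So d q0.

Definition obs_delta (Q Sigma : finType) (So : {set Sigma})
  (d : Q -> Sigma -> option Q) (B : Q -> Prop) (a : Sigma)
  : option (Q -> Prop) :=
  let B' := fun q' => exists q p, B q /\ d q a = Some p /\ epsR So d p q' in
  if excluded_middle_informative (exists q', B' q') then Some B' else None.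

Definition par_delta (Q Sigma : finType) (So : {set Sigma})
  (d : Q -> Sigma -> option Q) (x : Q * (Q -> Prop)) (a : Sigma)
  : option (Q * (Q -> Prop)) :=
  if a \in So then
    match d x.1 a, obs_delta So d x.2 a with
    | Some q, Some A => Some (q, A)
    | _, _ => None
    end
  else
    match d x.1 a with Some q => Some (q, x.2) | None => None end.

Definition par_init (Q Sigma : finType) (So : {set Sigma})
  (d : Q -> Sigma -> option Q) (q0 : Q) : Q * (Q -> Prop) :=
  (q0, obs_init So d q0).

Definition inL (Q Sigma : finType) (d : Q -> Sigma -> option Q) (q0 : Q)
  (s : seq Sigma) : Prop := ext d q0 s <> None.

Definition match_rel (Q Sigma : finType) (So : {set Sigma})
  (d : Q -> Sigma -> option Q) (q0 : Q) (s s' : seq Sigma) : Prop :=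
  (inL d q0 s ->
     eqresp d q0 s s' /\
     eqresp (obs_delta So d) (obs_init So d q0) (natproj So s) (natproj So s'))
  /\ (~ inL d q0 s -> ~ inL d q0 s').

From mathcomp Require Import all_boot.
From Stdlib Require Import ClassicalDescription.

(* The run of G || H on s is the pair formed by the run of G on s and the run
   of H on P(s), undefined as soon as one of them is.  The observer state
   always contains the current state of G (it contains the whole unobservable
   reach of it), so H is defined on P(s) whenever G is defined on s.  Hence
   G || H is defined on s exactly when G is, and equality of its states is
   equality of both components: this is match_{Sigma_o}. *)

Set Implicit Arguments.
Unset Strict Implicit.
Unset Printing Implicit Defensive.

Definition ozip (A B : Type) (x : option A) (y : option B) : option (A * B) :=
  if x is Some a then (if y is Some b then Some (a, b) else None) else None.

Lemma ozip_eq (A B : Type) (x x' : option A) (y y' : option B) :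
  (x <> None -> y <> None) -> (x' <> None -> y' <> None) ->
  ((x <> None -> x = x' /\ y = y') /\ (~ x <> None -> ~ x' <> None)) <->
  ozip x y = ozip x' y'.
Proof.
have someP (C : Type) (c : C) : Some c <> None by [].
case: x y => [a|] [b|] hy; try by elim: (hy (someP _ a) erefl).
all: case: x' y' => [a'|] [b'|] hy' //=; try by elim: (hy' (someP _ a') erefl).
1: by split=> [[/(_ (someP _ a)) [[->] [->]]]|[-> ->]].
1,2: by split=> [[/(_ (someP _ a)) []]|].
all: by split=> [[_ /(_ (fun n => n erefl)) /(_ (someP _ a'))]|].
Qed.

Section Observer.

Variables (Q Sigma : finType) (So : {set Sigma}) (d : Q -> Sigma -> option Q).

Lemma ext_par_delta s q (A : Q -> Prop) :
  ext (par_delta So d) (q, A) s =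
  ozip (ext d q s) (ext (obs_delta So d) A (natproj So s)).
Proof.
elim: s q A => [|a s IH] q A //=.
rewrite {1}/par_delta /natproj /= -/(natproj So s).
case: (a \in So) => /=; case: (d q a) => [p|] //=.
by case: (obs_delta So d A a) => [B|] /=; [exact: IH | case: (ext d p s)].
Qed.

Lemma epsR_refl q : epsR So d q q.
Proof. by exists [::]. Qed.

Lemma epsR_unobs_step q a p r :
  a \notin So -> d q a = Some p -> epsR So d p r -> epsR So d q r.
Proof.
move=> /negbTE aNo dqa [t [Pt qt]]; exists (a :: t).
by rewrite /natproj /= aNo dqa.
Qed.

Lemma obs_delta_cover (A : Q -> Prop) q a p :
  (forall r, epsR So d q r -> A r) -> d q a = Some p ->
  exists2 B, obs_delta So d A a = Some B & forall r, epsR So d p r -> B r.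
Proof.
move=> qA dqa; have pB r : epsR So d p r ->
    exists q1 p1, A q1 /\ d q1 a = Some p1 /\ epsR So d p1 r.
  by move=> pr; exists q, p; split; first exact/qA/epsR_refl.
rewrite /obs_delta; case: excluded_middle_informative => [? | nB].
  by eexists; first reflexivity.
by case: nB; exists p; apply/pB/epsR_refl.
Qed.

Lemma ext_obs_delta_cover s q q' (A : Q -> Prop) :
  (forall r, epsR So d q r -> A r) -> ext d q s = Some q' ->
  exists2 A', ext (obs_delta So d) A (natproj So s) = Some A' & A' q'.
Proof.
elim: s q A => [|a s IH] q A qA /=.
  by case=> <-; exists A; last exact/qA/epsR_refl.
case dqa: (d q a) => [p|] // pq'; rewrite /natproj /=.
case: ifP => [aSo|/negbT aNo] /=.
  have [B -> pB] := obs_delta_cover qA dqa; exact: IH pB pq'.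
by apply: IH pq' => r /(epsR_unobs_step aNo dqa)/qA.
Qed.

Lemma obs_defined_on_proj q0 s :
  ext d q0 s <> None ->
  ext (obs_delta So d) (obs_init So d q0) (natproj So s) <> None.
Proof.
case q0s: (ext d q0 s) => [q|] // _.
have q0A0 r : epsR So d q0 r -> obs_init So d q0 r by [].
by have [A' -> _] := ext_obs_delta_cover q0A0 q0s.
Qed.

End Observer.

Theorem lemma4 (Q Sigma : finType) (delta : Q -> Sigma -> option Q) (q0 : Q)
  (Qm : {set Q}) (So : {set Sigma}) :
  forall s s' : seq Sigma,
    match_rel So delta q0 s s' <->
    eqresp (par_delta So delta) (par_init So delta q0) s s'.
Proof.
move=> s s'; rewrite /match_rel /eqresp /inL /par_init !ext_par_delta.
by apply: ozip_eq; apply: obs_defined_on_proj.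
Qed.
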